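(* Let $I\ge 2$ and let $\bar A_1,\dots,\bar A_I$ be arrival processes such that each $\bar A_i$ is $(\lambda_i,\nu_i)$-constrained, with $\lambda_i>0$, $\nu_i\ge0$. Then their superposition $\bar A$ is $(\lambda,\nu)$-constrained with $$\lambda=\sum_{i=1}^I\lambda_i,\qquad \nu=\sum_{i=1}^I\nu_i+(I-1).$$
   Context: An arrival process is described by its arrival time function: a nondecreasing sequence $(\bar A(n))_{n\ge 1}$ of nonnegative real numbers, where $\bar A(n)$ is the arrival time of packet $n$. By convention $\bar A(0)=0$, and $\bar A(m,n):=\bar A(n)-\bar A(m)$ for integers $n\ge m\ge 0$. Write $x^+=\max\{x,0\}$. For constants $\lambda>0$ and $\nu\ge 0$, the process is called $(\lambda,\nu)$-constrained if $\bar A(m,n)\ge \frac{1}{\lambda}(n-m-\nu)^+$ for all integers $n\ge m\ge 0$. The superposition (aggregate) of arrival processes $\bar A_1,\dots,\bar A_I$ (each with $\bar A_i(0)=0$) is the arrival process $\bar A$ given by $\bar A(n)=\inf\{\max_{1\le i\le I}\bar A_i(m_i): m_1,\dots,m_I\ge 0 \text{ integers},\ m_1+\cdots+m_I=n\}$ for $n\ge 0$; equivalently, $\bar A(n)$ is the $n$-th smallest element (counted with multiplicity) of the multiset of all packet arrival times $\{\bar A_i(k): 1\le i\le I,\ k\ge 1\}$. *)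

From HB Require Import structures.
From mathcomp Require Import all_boot all_order all_algebra.
Set Implicit Arguments. Unset Strict Implicit. Unset Printing Implicit Defensive.
Import Order.TTheory GRing.Theory Num.Theory.
Local Open Scope ring_scope.

Definition arrival_process (R : realFieldType) (A : nat -> R) : Prop :=
  A 0%N = 0 /\ (forall n, 0 <= A n) /\ (forall m n, (m <= n)%N -> A m <= A n).

Definition pospart (R : realFieldType) (x : R) : R := Num.max x 0.

Definition constrained (R : realFieldType) (A : nat -> R) (lam nu : R) : Prop :=
  forall m n : nat, (m <= n)%N ->
    pospart ((n - m)%:R - nu) / lam <= A n - A m.

(* max_i A_i(m_i); the index 0 is harmless since all values are >= 0 *)
Definition maxval (R : realFieldType) (I n : nat) (A : 'I_I -> nat -> R)
  (m : {ffun 'I_I -> 'I_n.+1}) : R :=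
  \big[Num.max/0]_(i < I) A i (m i).

(* Superposition: Abar(n) = inf { max_i A_i(m_i) : m_1+...+m_I = n }.
   Each m_i <= n, so m ranges over the finite set of functions 'I_I -> 'I_(n+1)
   with sum n, and the inf is a min.  The neutral element max_i A_i(n) is an
   upper bound of (and, for I >= 1, dominated by a member of) the set, so it
   does not affect the value. *)
Definition superposition (R : realFieldType) (I : nat) (A : 'I_I -> nat -> R)
  (n : nat) : R :=
  let top := \big[Num.max/0]_(i < I) A i n in
  \big[Num.min/top]_(m : {ffun 'I_I -> 'I_n.+1} |
      (\sum_(i < I) (m i : nat))%N == n) maxval A m.

(** [S n] is the minimum over allocations [a] of [n] packets ([sum_i a_i = n])
   of [t = max_i A_i(a_i)].  Fix such an allocation and a delay [0 <= d <= t].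
   In each process let [b_i] be the last packet arriving by time [t - d]; the
   [a_i - b_i - 1] packets after it arrive within time [d], so the constraint
   gives [a_i - b_i < lam_i d + 1 + nu_i].  Summing, with [L = sum_i lam_i]
   and [N = sum_i nu_i], the allocation [b] has [sum_i b_i > n - L d - N - I]
   packets, all arrived by [t - d].  Choosing [L d = n - m - N - (I - 1)]
   gives [S m <= t - d]; the bound [d <= t] is the constraint between packets
   [0] and [a_i], summed over [i]. *)
From HB Require Import structures.
From mathcomp Require Import all_boot all_order all_algebra.
From mathcomp Require Import zify lra.
Import Order.TTheory GRing.Theory Num.Theory.
Local Open Scope ring_scope.

Lemma sum_minn_prefix (F : nat -> nat) (m k : nat) :
  (\sum_(i < k) minn (F i) (m - \sum_(j < i) F j))%N
  = minn (\sum_(i < k) F i)%N m.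
Proof.
elim: k => [|k IH]; first by rewrite !big_ord0 min0n.
rewrite !big_ord_recr /= IH.
set S := (\sum_(i < k) F i)%N; lia.
Qed.

(* Greedy truncation: give each index its full budget until [m] is reached. *)
Lemma exists_allocation_le (I m : nat) (c : 'I_I -> nat) :
  (m <= \sum_(i < I) c i)%N ->
  exists b : {ffun 'I_I -> 'I_m.+1},
    (\sum_(i < I) (b i : nat))%N = m /\ forall i, (b i <= c i)%N.
Proof.
move=> hm.
pose G (j : nat) : nat := if insub j is Some i then c i else 0%N.
have cG (i : 'I_I) : c i = G i by rewrite /G valK.
pose g (i : 'I_I) := minn (G i) (m - \sum_(j < i) G j).
have gm (i : 'I_I) : (g i < m.+1)%N by rewrite ltnS /g; lia.
exists [ffun i => inord (g i)]; split=> [|i]; last by rewrite ffunE inordK // cG /g geq_minl.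
rewrite (eq_bigr g) => [|i _]; last by rewrite ffunE inordK.
rewrite sum_minn_prefix (eq_bigr c) => [|i _]; [exact/minn_idPr | by rewrite cG].
Qed.

Lemma le_pospart {R : realFieldType} (x : R) : x <= pospart x.
Proof. by rewrite le_max lexx. Qed.

Section Superposition.

Context {R : realFieldType} {I : nat} {A : 'I_I -> nat -> R}.
Hypothesis hA : forall i, arrival_process (A i).

Lemma superposition_le (m : nat) (c : 'I_I -> nat) (u : R) :
  (m <= \sum_(i < I) c i)%N -> 0 <= u -> (forall i, A i (c i) <= u) ->
  superposition A m <= u.
Proof.
move=> hm u0 hcu; have [b [hb hbc]] := exists_allocation_le _ _ _ hm.
apply: (bigmin_inf b); first exact/eqP.
apply: bigmax_le => // i _; apply: le_trans (hcu i).
by have [_ [_ ->]] := hA i.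
Qed.

Lemma le_superposition (n : nat) (x : R) : (0 < I)%N ->
  (forall a : {ffun 'I_I -> 'I_n.+1}, (\sum_(i < I) (a i : nat))%N = n ->
      x <= maxval A a) ->
  x <= superposition A n.
Proof.
move=> hI hx; apply: le_bigmin => [|a /eqP]; last exact: hx.
pose i0 : 'I_I := Ordinal hI.
pose w : {ffun 'I_I -> 'I_n.+1} := [ffun i => if i == i0 then ord_max else ord0].
have hw : (\sum_(i < I) (w i : nat))%N = n.
  rewrite (bigD1 i0) //= ffunE eqxx big1 ?addn0 // => i /negbTE hi.
  by rewrite ffunE hi.
apply: le_trans (hx w hw) _; apply: bigmax_le => [|i _].
  by apply: le_trans (le_bigmax 0 (fun j => A j n) i0); have [_ []] := hA i0.
apply: le_trans (le_bigmax 0 (fun j => A j n) i).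
by have [_ [_ ->]] := hA i; rewrite // -ltnS.
Qed.

End Superposition.

(* The largest [k <= a] with [f k <= u], defaulting to [0] if there is none. *)
Fixpoint last_below {R : realFieldType} (f : nat -> R) (u : R) (a : nat) : nat :=
  if a is a'.+1 then (if f a <= u then a else last_below f u a') else 0%N.

Section LastBelow.

Context {R : realFieldType} (f : nat -> R) (u : R).

Lemma last_below_le a : (last_below f u a <= a)%N.
Proof. by elim: a => //= a IH; case: ifP => // _; apply: leqW. Qed.

Lemma last_below_val a : f 0%N <= u -> f (last_below f u a) <= u.
Proof. by move=> f0u; elim: a => //= a IH; case: ifP. Qed.

Lemma last_below_next a :
  (last_below f u a < a)%N -> u < f (last_below f u a).+1.
Proof.
elim: a => //= a IH; case: ifP => [_|fau]; first by rewrite ltnn.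
move=> _; have := last_below_le a; rewrite leq_eqVlt => /orP [/eqP ->|/IH //].
by rewrite ltNge fau.
Qed.

End LastBelow.

Section Constrained.

Context {R : realFieldType} {A : nat -> R} {lam nu : R}.
Hypotheses (hA : arrival_process A) (hlam : 0 < lam)
  (hc : constrained A lam nu).

Lemma constrained_count_le a : a%:R - nu <= lam * A a.
Proof.
have := hc 0%N a (leq0n a); rewrite (proj1 hA) subr0 subn0 ler_pdivrMr // mulrC.
exact/le_trans/le_pospart.
Qed.

Lemma constrained_last_below (u d : R) (a : nat) :
  0 <= nu -> 0 <= d -> A a <= u + d ->
  a%:R - (last_below A u a)%:R < lam * d + 1 + nu.
Proof.
set b := last_below A u a => nu0 d0 hAa.
have := last_below_le A u a; rewrite -/b leq_eqVlt => /orP [/eqP ->|ltba].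
  rewrite subrr; suff : 0 <= lam * d by lra.
  by rewrite mulr_ge0 // ltW.
have hb1 : u < A b.+1 := last_below_next A u a ltba.
have := hc _ _ ltba; rewrite natrB // -natr1 ler_pdivrMr //.
move=> /(le_trans (le_pospart _)) hgap.
have hlag : (A a - A b.+1) * lam < d * lam by rewrite ltr_pM2r //; lra.
rewrite [lam * d]mulrC; lra.
Qed.

End Constrained.

Section ConstrainedSuperposition.

Context {R : realFieldType} {I : nat} {A : 'I_I -> nat -> R} {lam nu : 'I_I -> R}.
Hypotheses (hI : (0 < I)%N) (hA : forall i, arrival_process (A i))
  (hlam : forall i, 0 < lam i) (hnu : forall i, 0 <= nu i)
  (hc : forall i, constrained (A i) (lam i) (nu i)).

Lemma has_index : has predT (index_enum 'I_I).
Proof. by apply/hasP; exists (Ordinal hI); rewrite ?mem_index_enum. Qed.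

Lemma sumr_ord_gt0 (F : 'I_I -> R) : (forall i, 0 < F i) -> 0 < \sum_(i < I) F i.
Proof. by move=> F0; have := ltr_sum has_index (fun i _ => F0 i); rewrite big1. Qed.

Lemma allocation_count_le (a : 'I_I -> nat) (t : R) :
  (forall i, A i (a i) <= t) ->
  \sum_(i < I) (a i)%:R - \sum_(i < I) nu i <= (\sum_(i < I) lam i) * t.
Proof.
move=> hat; rewrite -sumrB mulr_suml; apply: ler_sum => i _.
by apply: le_trans (constrained_count_le (hA i) (hlam i) (hc i) _) _; rewrite ler_pM2l.
Qed.

Lemma superposition_le_sub (a : 'I_I -> nat) (t d : R) (m : nat) :
  (forall i, A i (a i) <= t) -> 0 <= d -> d <= t ->
  m%:R <= \sum_(i < I) ((a i)%:R - (lam i * d + 1 + nu i)) + 1 ->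
  superposition A m <= t - d.
Proof.
move=> hat d0 dt hm; set u := t - d.
pose b i := last_below (A i) u (a i).
have hb i : (a i)%:R - (b i)%:R < lam i * d + 1 + nu i.
  by apply: constrained_last_below; rewrite ?subrK.
have hlt i : (a i)%:R - (lam i * d + 1 + nu i) < (b i)%:R by have := hb i; lra.
have hsum := ltr_sum has_index (fun i _ => hlt i).
have hmb : (m <= \sum_(i < I) b i)%N.
  by rewrite -ltnS -(ltr_nat R) -natr1 natr_sum; lra.
apply: (superposition_le hA _ b) => // [|i]; first by rewrite subr_ge0.
by apply: last_below_val; rewrite (proj1 (hA i)) subr_ge0.
Qed.

End ConstrainedSuperposition.

Theorem theorem2 (R : realFieldType) (I : nat) (hI : (2 <= I)%N)
  (A : 'I_I -> nat -> R) (lam nu : 'I_I -> R)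
  (hA : forall i, arrival_process (A i))
  (hlam : forall i, 0 < lam i) (hnu : forall i, 0 <= nu i)
  (hc : forall i, constrained (A i) (lam i) (nu i)) :
  constrained (superposition A) (\sum_(i < I) lam i)
    (\sum_(i < I) nu i + (I - 1)%:R).
Proof.
move=> m n hmn; have hI0 : (0 < I)%N by apply: leq_trans hI.
have L0 := sumr_ord_gt0 hI0 lam hlam.
set L := \sum_(i < I) lam i; set N := \sum_(i < I) nu i.
set x := (n - m)%:R - (N + (I - 1)%:R).
rewrite lerBrDr; apply: (le_superposition hA) => // a ha; rewrite addrC -lerBrDr.
set t := maxval A a.
have hat i : A i (a i) <= t := le_bigmax 0 (fun j => A j (a j)) i.
have t0 : 0 <= t.
  by apply: le_trans (hat (Ordinal hI0)); have [_ []] := hA (Ordinal hI0).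
have [x_le0 | x_gt0] := lerP x 0.
  rewrite /pospart max_r // mul0r subr0.
  by apply: (superposition_le hA _ (fun i => a i)) => //; rewrite ha.
have hn : \sum_(i < I) (a i)%:R = n%:R :> R by rewrite -natr_sum ha.
have hnm : (n - m)%:R = n%:R - m%:R :> R by rewrite natrB.
have hI1 : (I - 1)%:R = I%:R - 1 :> R by rewrite natrB.
rewrite /pospart max_l; last exact: ltW.
apply: (superposition_le_sub hI0 hA hlam hnu hc (fun i => a i)) => //.
- by rewrite divr_ge0 ?ltW.
- rewrite ler_pdivrMr // mulrC.
  have := allocation_count_le hA hlam hc (fun i => a i) t hat.
  rewrite hn -/N -/L /x hnm; have := ler0n R m; have := ler0n R (I - 1); lra.
rewrite sumrB !big_split /= -mulr_suml sumr_const card_ord hn mulrC divfK ?gt_eqF //.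
by rewrite -/N /x hnm hI1; lra.
Qed.
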